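(* Let $G$ be a finite graph with edge set $E$, and let $P$ be a set of unordered pairs $\{e_1,e_2\}$ of distinct edges of $G$. Then there exist an integer $r$ with $0\le r\le |P|$, a set $F=\{f_1,\dots,f_r\}$ of new labels disjoint from $E$, and a real matrix $A$ with columns labelled by $E\cup F$ such that: (i) after a permutation of columns, $A$ has the block form $$A=\begin{pmatrix} I_{\mathrm{rk}\, G} & 0 & C \\ 0 & I_{r} & D \end{pmatrix},$$ where $\mathrm{rk}\, G$ is the rank of the cycle matroid of $G$ (number of vertices minus number of connected components), the columns of the middle block are those labelled by $F$, and every entry of $C$ and $D$ lies in $\{0,1,-1\}$; (ii) the matrix $(I_{\mathrm{rk}\, G}\,|\,C)$, with its columns labelled by $E$, represents the cycle matroid of $G$ over $\mathbb{R}$ (so the matroid represented by $A$ is a coextension of the cycle matroid of $G$, i.e. contracting $F$ in it gives the cycle matroid of $G$); (iii) for every pair $\{e_1,e_2\}\in P$ there exist a column label $g\in E\cup F$ and nonzero real numbers $\alpha,\beta$ such that every vector $x\in\mathbb{R}^{E\cup F}$ with $Ax=0$ satisfies $x_g=\alpha x_{e_1}+\beta x_{e_2}$ (that is, the ''momentum'' of $g$ is a linear combination with both weights nonzero of the momenta of $e_1$ and $e_2$).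
   Context: A matroid on a finite set $E$ is given by its set of circuits. A real matrix with columns labelled by $E$ represents the matroid whose circuits are the minimal linearly dependent sets of columns. The cycle matroid of a graph $G$ has ground set the edge set and circuits the cycles of $G$; it is represented by the (directed) incidence matrix of $G$. A matroid $M$ on $E\cup F$ is a coextension of a matroid $N$ on $E$ if $N$ is obtained from $M$ by contracting $F$. Physically, the kernel of the representing matrix parametrizes assignments of momenta to edges satisfying momentum conservation (rows = momentum-conserving sets), and the set $P$ records pairs of edges whose momenta appear dotted together in the numerator of a Feynman integral; each new element of $F$ corresponds to an extra propagator whose momentum is a linear combination of the momenta of a pair in $P$. *)

From HB Require Import structures.
From mathcomp Require Import all_boot all_order all_algebra.
From mathcomp Require Import reals.
Set Implicit Arguments. Unset Strict Implicit. Unset Printing Implicit Defensive.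
Import Order.TTheory GRing.Theory Num.Theory.
Local Open Scope ring_scope.

(* A finite (multi)graph: vertices V, edges E, each edge e has endpoints
   ends e = (tail, head) (an arbitrary orientation; loops allowed). *)

Definition subadj (V E : finType) (ends : E -> V * V) (C : {set E}) : rel V :=
  fun u v => [exists e in C, (ends e == (u, v)) || (ends e == (v, u))].

Definition gadj (V E : finType) (ends : E -> V * V) : rel V :=
  subadj ends [set: E].

Definition graph_rank (V E : finType) (ends : E -> V * V) : nat :=
  (#|V| - n_comp (gadj ends) predT)%N.

Definition sdeg (V E : finType) (ends : E -> V * V) (C : {set E}) (v : V) : nat :=
  (#|[set e in C | (ends e).1 == v]| + #|[set e in C | (ends e).2 == v]|)%N.

Definition is_cycle (V E : finType) (ends : E -> V * V) (C : {set E}) : Prop :=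
  C != set0 /\
  (forall v, sdeg ends C v = 0%N \/ sdeg ends C v = 2%N) /\
  (forall u v, sdeg ends C u != 0%N -> sdeg ends C v != 0%N ->
     connect (subadj ends C) u v).

Definition col_dependent (R : realType) (I L : finType) (A : I -> L -> R)
  (S : {set L}) : Prop :=
  exists x : L -> R,
    (forall l, l \notin S -> x l = 0) /\ (exists l, x l != 0) /\
    (forall i, \sum_(l : L) A i l * x l = 0).

Definition col_circuit (R : realType) (I L : finType) (A : I -> L -> R)
  (S : {set L}) : Prop :=
  col_dependent A S /\ (forall T : {set L}, T \proper S -> ~ col_dependent A T).

Definition represents_cycle_matroid (R : realType) (V E I : finType)
  (ends : E -> V * V) (A : I -> E -> R) : Prop :=
  forall S : {set E}, col_circuit A S <-> is_cycle ends S.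

Definition in_kernel (R : realType) (I L : finType) (A : I -> L -> R)
  (x : L -> R) : Prop :=
  forall i, \sum_(l : L) A i l * x l = 0.

From HB Require Import structures.
From mathcomp Require Import all_boot all_order all_algebra.
From mathcomp Require Import reals boolp.
From Stdlib Require Import Lia.
From mathcomp Require Import zify ring.
Set Implicit Arguments. Unset Strict Implicit. Unset Printing Implicit Defensive.
Import Order.TTheory GRing.Theory Num.Theory.
Local Open Scope ring_scope.

(* Fix a basis B of the column matroid of the incidence matrix N of G, i.e. a
   spanning forest.  The circuits of N are exactly the cycles of G.  For a
   chord c, the fundamental circuit of c carries a circulation phi_c with
   phi_c(c) = 1, supported on c + B and with values in {0, 1, -1}; the matrix
   (I | C) with entry -phi_c(b) in row b and column c has the circulations as
   kernel, hence represents the cycle matroid.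
   For a pair p, let S_p be the set of vertices lying on the tail side of the
   fundamental cuts of an odd number of forest edges of p.  The cut of S_p
   meets B exactly in p, so summing momentum conservation over S_p gives a
   relation sum_e sigma_e x_e = 0 with sigma in {0, 1, -1}^E, nonzero on the
   forest edges of p.  The row x_(f_p) + sum_e d_e x_e = 0, where d agrees with
   sigma off p, vanishes on B and is chosen on the chords of p so that
   sigma - d does not vanish there, then forces
   x_(f_p) = (sigma - d)_(e1) x_(e1) + (sigma - d)_(e2) x_(e2). *)

Lemma sum_delta_mul (R : pzSemiRingType) (T : finType) (a : T) (F : T -> R) :
  \sum_t (t == a)%:R * F t = F a.
Proof.
rewrite (bigD1 a) //= eqxx mul1r big1 ?addr0 // => t /negbTE ->.
by rewrite mul0r.
Qed.

Lemma underdetermined_system_nontrivial (F : fieldType) (I L : finType)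
    (M : I -> L -> F) (Is : {set I}) (Ls : {set L}) :
  (#|Is| < #|Ls|)%N ->
  exists x : L -> F, (forall l, l \notin Ls -> x l = 0) /\ (exists l, x l != 0) /\
    (forall i, i \in Is -> \sum_l M i l * x l = 0).
Proof.
move=> hlt.
pose Mt : 'M[F]_(#|Ls|, #|Is|) := \matrix_(k, j) M (enum_val j) (enum_val k).
pose K := kermx Mt.
have rK : (0 < \rank K)%N by rewrite mxrank_ker; have := rank_leq_col Mt; lia.
have [k hk] : exists k, row k K != 0.
  apply/existsP; apply: contraLR rK; rewrite negb_exists => /forallP H.
  suff -> : K = 0 by rewrite mxrank0.
  apply/matrixP => a b; have /negPn/eqP/matrixP/(_ 0 b) := H a.
  by rewrite !mxE.
set u := row k K in hk.
have uM : u *m Mt = 0 by apply/sub_kermxP; exact: row_sub.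
pose x l := \sum_(k0 < #|Ls|) (enum_val k0 == l)%:R * u 0 k0.
have xev k0 : x (enum_val k0) = u 0 k0.
  rewrite /x (bigD1 k0) //= eqxx mul1r big1 ?addr0 // => k1 hk1.
  by rewrite (inj_eq enum_val_inj) (negbTE hk1) mul0r.
exists x; split; [|split].
- move=> l hl; rewrite /x big1 // => k0 _.
  have : enum_val k0 \in Ls := enum_valP k0.
  by case: eqP => [-> |]; [rewrite (negbTE hl)|rewrite mul0r].
- have [k0 hk0] : exists k0, u 0 k0 != 0.
    apply/existsP; apply: contraR hk; rewrite negb_exists => /forallP H.
    apply/eqP/matrixP => a b; rewrite ord1 !mxE.
    by have := H b; rewrite negbK !mxE => /eqP.
  by exists (enum_val k0); rewrite xev.
- move=> i hi.
  have h : (u *m Mt) 0 (enum_rank_in hi i) = 0 by rewrite uM mxE.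
  rewrite -[RHS]h !mxE /Mt; under [in RHS]eq_bigr => j _ do rewrite mxE.
  rewrite /x; under [in LHS]eq_bigr => l _ do rewrite mulr_sumr.
  rewrite exchange_big /=; apply: eq_bigr => k0 _.
  rewrite [X in _ = _ * X]mxE enum_rankK_in // /u mxE (bigD1 (enum_val k0)) //=.
  rewrite eqxx mul1r big1 ?addr0; first by rewrite mulrC.
  by move=> l hl; rewrite eq_sym (negbTE hl) mul0r mulr0.
Qed.

Lemma connect_ind (T : finType) (r : rel T) (P : T -> Prop) u :
  P u -> (forall a b, P a -> r a b -> P b) -> forall w, connect r u w -> P w.
Proof.
move=> Pu Hst w /connectP [p]; elim: p u Pu => [|a p IH] u Pu /=.
  by move=> _ ->.
by move=> /andP [ra pa] hw; exact: (IH a (Hst _ _ Pu ra) pa hw).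
Qed.

Lemma sep_set1 (T : finType) (l : T) (f : pred T) :
  [set e in [set l] | f e] = if f l then [set l] else set0.
Proof.
apply/setP => e; rewrite !inE; case: (eqVneq e l) => [->|ne]; case hf: (f l);
  by rewrite ?inE ?eqxx ?hf ?(negbTE ne) ?andbF.
Qed.

Lemma enum_set_ord (T : finType) (B : {set T}) n : #|B| = n ->
  exists b : 'I_n -> T,
    [/\ injective b, forall i, b i \in B & forall e, e \in B -> exists i, b i = e].
Proof.
move=> cB; exists (fun i => enum_val (cast_ord (esym cB) i)); split.
- by move=> i1 i2 /enum_val_inj /(congr1 val) /= h; apply: val_inj.
- by move=> i; exact: enum_valP.
- by move=> e he; exists (cast_ord cB (enum_rank_in he e)); rewrite cast_ordK enum_rankK_in.
Qed.

Section CycleMatroid.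
Variables (R : realType) (V E : finType) (ends : E -> V * V).

Local Notation tail e := (ends e).1.
Local Notation head e := (ends e).2.

Definition incidence (v : V) (e : E) : R := (v == head e)%:R - (v == tail e)%:R.
Definition circulation (x : E -> R) := forall v, \sum_e incidence v e * x e = 0.
Definition incident (v : V) (e : E) := (tail e == v) || (head e == v).
Definition loopless (C : {set E}) := forall e, e \in C -> tail e != head e.
Definition is_sign (a : R) := a = 0 \/ a = 1 \/ a = -1.

Lemma sum_incidence_in (S : {set V}) e :
  \sum_(v in S) incidence v e = (head e \in S)%:R - (tail e \in S)%:R.
Proof.
have delta a : \sum_(v in S) (v == a)%:R = (a \in S)%:R :> R.
  rewrite big_mkcond /= -(sum_delta_mul a (fun v => (v \in S)%:R)).
  by apply: eq_bigr => v _; case: (v \in S); case: (v == a); rewrite ?mulr1 ?mulr0.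
by rewrite sumrB !delta.
Qed.

Lemma sum_incidence e : \sum_v incidence v e = 0.
Proof.
rewrite (eq_bigl (fun v => v \in [set: V])); first by rewrite sum_incidence_in !inE subrr.
by move=> v; rewrite inE.
Qed.

Lemma potential_incidence (y : V -> R) e :
  \sum_v y v * incidence v e = y (head e) - y (tail e).
Proof.
rewrite /incidence; under eq_bigr => v _ do rewrite mulrBr.
by rewrite sumrB; congr (_ - _); rewrite -(sum_delta_mul _ y);
  apply: eq_bigr => v _; rewrite mulrC.
Qed.

Lemma incidence_notin v e : ~~ incident v e -> incidence v e = 0.
Proof.
rewrite /incident negb_or => /andP [h1 h2].
by rewrite /incidence eq_sym (negbTE h2) eq_sym (negbTE h1) subrr.
Qed.

Lemma norm_incidence v e : tail e != head e -> incident v e -> `|incidence v e| = 1.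
Proof.
rewrite /incident /incidence => hne /orP [] /eqP <-.
  by rewrite (negbTE hne) eqxx sub0r normrN normr1.
by rewrite eqxx eq_sym (negbTE hne) subr0 normr1.
Qed.

Lemma sum_conservation_in (S : {set V}) x :
  \sum_(v in S) \sum_e incidence v e * x e =
  \sum_e ((head e \in S)%:R - (tail e \in S)%:R) * x e.
Proof.
by rewrite exchange_big /=; apply: eq_bigr => e _; rewrite -sum_incidence_in mulr_suml.
Qed.

Lemma circulation_cut (S : {set V}) x : circulation x ->
  \sum_e ((head e \in S)%:R - (tail e \in S)%:R) * x e = 0.
Proof. by move=> cx; rewrite -sum_conservation_in big1 // => v _; exact: cx. Qed.

Lemma circulation_from x v0 :
  (forall v, v != v0 -> \sum_e incidence v e * x e = 0) -> circulation x.
Proof.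
move=> h v; case: (eqVneq v v0) => [->|]; last exact: h.
have tot : \sum_v \sum_e incidence v e * x e = 0.
  by rewrite exchange_big /= big1 // => e _; rewrite -mulr_suml sum_incidence mul0r.
by move: tot; rewrite (bigD1 v0) //= [X in _ + X]big1 ?addr0.
Qed.

Lemma circulation_lin (I : finType) (P : pred I) (w : I -> R) (g : I -> E -> R) :
  (forall i, P i -> circulation (g i)) ->
  circulation (fun e => \sum_(i | P i) w i * g i e).
Proof.
move=> cg v; under eq_bigr => e _ do rewrite mulr_sumr.
rewrite exchange_big /= big1 // => i Pi.
under eq_bigr => e _ do rewrite mulrCA.
by rewrite -mulr_sumr cg // mulr0.
Qed.

Lemma circulationZ x a : circulation x -> circulation (fun e => x e * a).
Proof.
move=> cx v; under eq_bigr => e _ do rewrite mulrA.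
by rewrite -mulr_suml cx mul0r.
Qed.

Lemma circulationB x y : circulation x -> circulation y -> circulation (fun e => x e - y e).
Proof.
move=> cx cy v; under eq_bigr => e _ do rewrite mulrBr.
by rewrite sumrB cx cy subr0.
Qed.

Lemma eq_circulation x y : x =1 y -> circulation x -> circulation y.
Proof. by move=> h cx v; rewrite -[RHS](cx v); apply: eq_bigr => e _; rewrite h. Qed.

Lemma subadj_sym (C : {set E}) : symmetric (subadj ends C).
Proof.
move=> u w; apply/existsP/existsP => [] [e /andP [he h]];
  by exists e; rewrite he /= orbC.
Qed.

Lemma subadjP (C : {set E}) u w :
  reflect (exists2 e, e \in C & ends e = (u, w) \/ ends e = (w, u)) (subadj ends C u w).
Proof.
apply: (iffP existsP) => [[e /andP [he /orP [] /eqP h]]|[e he [] h]].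
- by exists e => //; left.
- by exists e => //; right.
- by exists e; rewrite he h eqxx.
- by exists e; rewrite he h eqxx orbT.
Qed.

Lemma subadj_ends (C : {set E}) e : e \in C -> subadj ends C (tail e) (head e).
Proof. by move=> he; apply/subadjP; exists e => //; left; case: (ends e). Qed.

Lemma sum_sdeg (C : {set E}) : (\sum_v sdeg ends C v = 2 * #|C|)%N.
Proof.
have H (f : E -> V) : (\sum_v #|[set e in C | f e == v]| = #|C|)%N.
  rewrite (eq_bigr (fun v => (\sum_(e in C) (f e == v))%N)); last first.
    move=> v _; rewrite -sum1_card big_mkcond /= [RHS]big_mkcond.
    by apply: eq_bigr => e _; rewrite inE; case: (e \in C).
  rewrite exchange_big /= -sum1_card; apply: eq_bigr => e _.
  by rewrite (bigD1 (f e)) //= eqxx big1 ?addn0 // => v; rewrite eq_sym => /negbTE ->.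
by rewrite /sdeg big_split /= !H mul2n addnn.
Qed.

Lemma sdeg_ends (C : {set E}) e : e \in C ->
  (sdeg ends C (tail e) != 0)%N /\ (sdeg ends C (head e) != 0)%N.
Proof.
move=> he; rewrite /sdeg; split; rewrite -lt0n.
  by apply: ltn_addr; apply/card_gt0P; exists e; rewrite inE he eqxx.
by apply: ltn_addl; apply/card_gt0P; exists e; rewrite inE he eqxx.
Qed.

Lemma sdeg_loopless (C : {set E}) v : loopless C ->
  sdeg ends C v = #|[set e in C | incident v e]|.
Proof.
move=> lf; rewrite /sdeg.
have -> : [set e in C | incident v e] =
    [set e in C | tail e == v] :|: [set e in C | head e == v].
  by apply/setP => e; rewrite !inE /incident andb_orr.
rewrite cardsU.
suff -> : [set e in C | tail e == v] :&: [set e in C | head e == v] = set0.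
  by rewrite cards0 subn0.
apply/setP => e; rewrite !inE.
apply/negP => /andP [/andP [he /eqP h1] /andP [_ /eqP h2]].
by have := lf e he; rewrite h1 h2 eqxx.
Qed.

Lemma sdeg0_notincident (C : {set E}) v e :
  sdeg ends C v = 0%N -> e \in C -> ~~ incident v e.
Proof.
rewrite /sdeg => /eqP; rewrite addn_eq0 !cards_eq0 => /andP [/eqP h1 /eqP h2] he.
rewrite /incident; apply/negP => /orP [] hv.
  have : e \in [set e in C | tail e == v] by rewrite inE he hv.
  by rewrite h1 inE.
have : e \in [set e in C | head e == v] by rewrite inE he hv.
by rewrite h2 inE.
Qed.

Lemma circulation_off (S : {set E}) x v : (forall e, e \notin S -> x e = 0) ->
  sdeg ends S v = 0%N -> \sum_e incidence v e * x e = 0.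
Proof.
move=> supp h0; apply: big1 => e _; case: (boolP (e \in S)) => he.
  by rewrite incidence_notin ?mul0r // (sdeg0_notincident h0).
by rewrite supp ?mulr0.
Qed.

(** * Cycles are circuits of the incidence matrix *)

Lemma cycle_loop (C : {set E}) l : is_cycle ends C -> l \in C -> tail l = head l ->
  C = [set l].
Proof.
move=> [nz [deg con]] hl hll.
set v := tail l.
have hA : l \in [set e in C | tail e == v] by rewrite inE hl eqxx.
have hB : l \in [set e in C | head e == v] by rewrite inE hl -hll eqxx.
have hs : sdeg ends C v = 2%N.
  by case: (deg v) => // h0; have := (sdeg_ends hl).1; rewrite h0.
have [cA cB] :
    #|[set e in C | tail e == v]| = 1%N /\ #|[set e in C | head e == v]| = 1%N.
  move: hs; rewrite /sdeg.
  have : (0 < #|[set e in C | tail e == v]|)%N by apply/card_gt0P; exists l.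
  have : (0 < #|[set e in C | head e == v]|)%N by apply/card_gt0P; exists l.
  lia.
have onlyl e : e \in C -> incident v e -> e = l.
  move=> he /orP [] h.
    have /eqP/cards1P [z hz] := cA; move: hA; rewrite hz inE => /eqP ->.
    by apply/set1P; rewrite -hz inE he h.
  have /eqP/cards1P [z hz] := cB; move: hB; rewrite hz inE => /eqP ->.
  by apply/set1P; rewrite -hz inE he h.
have clos : forall w, connect (subadj ends C) v w -> w = v.
  apply: connect_ind => // a b -> /subadjP [e he [] h].
    have := onlyl e he; rewrite /incident h eqxx => /(_ isT) el.
    by rewrite el in h; rewrite /v hll h.
  have := onlyl e he; rewrite /incident h eqxx orbT => /(_ isT) el.
  by rewrite el in h; rewrite /v h.
apply/setP => e; rewrite inE; apply/idP/eqP => [he|->//].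
apply: onlyl => //.
have := con v (tail e); rewrite hs (sdeg_ends he).1 => /(_ isT isT) /clos h.
by rewrite /incident h eqxx.
Qed.

(* Conservation at a vertex of degree 2 with entries +-1 in the incidence. *)
Lemma cycle_circulation_norm_adjacent (C : {set E}) x v e e' :
  is_cycle ends C -> loopless C -> (forall f, f \notin C -> x f = 0) ->
  circulation x -> e \in C -> e' \in C -> incident v e -> incident v e' ->
  `|x e| = `|x e'|.
Proof.
move=> [nz [deg con]] lf supp cx he he' ie ie'.
case: (eqVneq e e') => [-> //|ne].
set U := [set f in C | incident v f].
have hU : #|U| = 2%N.
  rewrite -sdeg_loopless //; case: (deg v) => // h0.
  by have := sdeg0_notincident h0 he; rewrite ie.
have eU : U = [set e; e'].
  apply/esym/eqP; rewrite eqEcard cards2 ne hU leqnn andbT.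
  by apply/subsetP => f; rewrite !inE => /orP [] /eqP ->; rewrite ?he ?ie ?he' ?ie'.
have := cx v.
rewrite (bigID (fun f => f \in U)) /= [X in _ + X]big1 ?addr0; last first.
  move=> f; rewrite inE negb_and => /orP [hf|hf].
    by rewrite supp ?mulr0.
  by rewrite incidence_notin ?mul0r.
rewrite eU big_setU1 /= ?big_set1; last by rewrite inE.
move/eqP; rewrite addr_eq0 => /eqP h.
have := congr1 (fun z => `|z|) h.
by rewrite /= normrN !normrM !norm_incidence ?mul1r //; exact: lf.
Qed.

Lemma cycle_circulation_norm (C : {set E}) x : is_cycle ends C ->
  (forall f, f \notin C -> x f = 0) -> circulation x ->
  forall e e', e \in C -> e' \in C -> `|x e| = `|x e'|.
Proof.
move=> cyc supp cx e e' he he'.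
case: (boolP [exists l in C, tail l == head l]).
  move=> /exists_inP [l hl /eqP hll].
  by move: he he'; rewrite (cycle_loop cyc hl hll) !inE => /eqP -> /eqP ->.
rewrite negb_exists => /forallP lf'.
have lf : loopless C by move=> f hf; have := lf' f; rewrite hf.
have [_ [_ con]] := cyc.
pose P w := forall f, f \in C -> incident w f -> `|x f| = `|x e|.
have P0 : P (tail e).
  move=> f hf hi; apply: (cycle_circulation_norm_adjacent cyc lf supp cx hf he hi).
  by rewrite /incident eqxx.
have clos : forall w, connect (subadj ends C) (tail e) w -> P w.
  apply: connect_ind => // a b Pa /subadjP [g hg hgab] f hf hi.
  have ia : incident a g by rewrite /incident; case: hgab => ->; rewrite eqxx ?orbT.
  have ib : incident b g by rewrite /incident; case: hgab => ->; rewrite eqxx ?orbT.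
  by rewrite (cycle_circulation_norm_adjacent cyc lf supp cx hf hg hi ib) (Pa g hg ia).
have := con (tail e) (tail e'); rewrite (sdeg_ends he).1 (sdeg_ends he').1.
by move=> /(_ isT isT) /clos /(_ e' he'); rewrite /incident eqxx => /(_ isT) ->.
Qed.

Lemma card_sdeg_support (S : {set E}) :
  (forall v, sdeg ends S v = 0%N \/ sdeg ends S v = 2%N) ->
  #|[set v | sdeg ends S v != 0%N]| = #|S|.
Proof.
move=> deg; have := sum_sdeg S.
rewrite (bigID (fun v => sdeg ends S v != 0%N)) /= [X in (_ + X)%N]big1; last first.
  by move=> v /negPn/eqP.
rewrite addn0 (eq_bigr (fun _ => 2%N)); last by move=> v; case: (deg v) => ->.
rewrite sum_nat_const mulnC => /eqP; rewrite eqn_pmul2l // => /eqP <-.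
by apply: eq_card => v; rewrite inE.
Qed.

(* A cycle touches as many vertices as it has edges, so conservation at all
   of them but one is an underdetermined system. *)
Lemma cycle_dependent C : is_cycle ends C -> col_dependent incidence C.
Proof.
move=> [nz [deg con]].
set K := [set v | sdeg ends C v != 0%N].
have cK : #|K| = #|C| by apply: card_sdeg_support.
have [e0 he0] : exists e0, e0 \in C by apply/set0Pn.
set v0 := tail e0.
have hv0 : v0 \in K by rewrite inE (sdeg_ends he0).1.
have lt : (#|K :\ v0| < #|C|)%N by move: (cardsD1 v0 K); rewrite hv0 cK; lia.
have [x [supp [nzx cx]]] := underdetermined_system_nontrivial incidence lt.
exists x; split => //; split => //.
apply: (@circulation_from x v0) => v hv.
case: (boolP (v \in K)) => hK; first by apply: cx; rewrite in_setD1 hv hK.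
by apply: (circulation_off supp); move: hK; rewrite inE negbK => /eqP.
Qed.

Lemma cycle_circuit C : is_cycle ends C -> col_circuit incidence C.
Proof.
move=> cyc; split; first exact: cycle_dependent.
move=> T /properP [sTC [e heC heT]] [x [supp [[l0 hl0] cx]]].
have hl0T : l0 \in T by apply: contraR hl0 => h; rewrite supp.
have suppC f : f \notin C -> x f = 0.
  by move=> hf; apply: supp; apply: contra hf; exact: (subsetP sTC).
have := cycle_circulation_norm cyc suppC cx heC (subsetP sTC _ hl0T).
by rewrite supp // normr0 => /esym/eqP; rewrite normr_eq0 (negbTE hl0).
Qed.

(** * Circuits of the incidence matrix are cycles *)

Lemma circuit_support S x : col_circuit incidence S ->
  (forall e, e \notin S -> x e = 0) -> (exists l, x l != 0) -> circulation x ->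
  forall e, e \in S -> x e != 0.
Proof.
move=> [_ mini] supp nzx cx e he; apply/negP => /eqP xe0.
apply: (mini (S :\ e)); first by rewrite properD1.
exists x; split; last by split.
move=> f; rewrite in_setD1 negb_and negbK => /orP [/eqP ->|]; [exact: xe0|exact: supp].
Qed.

Lemma circuit_loop S l : col_circuit incidence S -> l \in S -> tail l = head l ->
  S = [set l].
Proof.
move=> [_ mini] hl hll; apply/eqP/negPn/negP => hne.
apply: (mini [set l]); first by rewrite properEneq sub1set hl andbT eq_sym.
exists (fun e => (e == l)%:R); split; first by move=> f; rewrite inE => /negbTE ->.
split; first by exists l; rewrite eqxx oner_neq0.
move=> v; apply: big1 => e _; case: eqP => [->|]; last by rewrite mulr0.
by rewrite /incidence hll subrr mul0r.
Qed.

Lemma loop_cycle l : tail l = head l -> is_cycle ends [set l].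
Proof.
move=> hll.
have sd v : sdeg ends [set l] v = if tail l == v then 2%N else 0%N.
  by rewrite /sdeg !sep_set1 -hll; case: ifP; rewrite ?cards1 ?cards0.
split; first by apply/set0Pn; exists l; rewrite inE.
split; first by move=> v; rewrite sd; case: ifP; auto.
move=> u w; rewrite !sd; do 2 case: ifP => // /eqP <-.
by move=> *; exact: connect0.
Qed.

Lemma circulation_sdeg_ge2 S x v : loopless S ->
  (forall e, e \notin S -> x e = 0) -> (forall e, e \in S -> x e != 0) ->
  circulation x -> sdeg ends S v != 0%N -> (2 <= sdeg ends S v)%N.
Proof.
move=> lf supp suppS cx; rewrite sdeg_loopless // => hK.
rewrite ltnNge; apply/negP => h1.
have /cards1P [e hU] : #|[set e in S | incident v e]| == 1%N.
  by move: hK h1; case: #|_| => [|[|]].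
have : e \in [set e in S | incident v e] by rewrite hU set11.
rewrite inE => /andP [he ie].
have := cx v; rewrite (bigD1 e) //= [X in _ + X]big1 ?addr0.
  move/eqP; rewrite mulf_eq0 (negbTE (suppS e he)) orbF -normr_eq0.
  by rewrite norm_incidence ?oner_eq0 //; exact: lf.
move=> f hf; case: (boolP (f \in S)) => fS; last by rewrite supp ?mulr0.
rewrite incidence_notin ?mul0r //; apply: contra hf => ifv.
have : f \in [set e in S | incident v e] by rewrite inE fS ifv.
by rewrite hU inE.
Qed.

(* Otherwise conservation at all but one touched vertex, together with
   x l0 = 0, has a nonzero solution supported on S :\ l0. *)
Lemma circuit_card_le S : col_circuit incidence S -> S != set0 ->
  (#|S| <= #|[set v | sdeg ends S v != 0%N]|)%N.
Proof.
move=> [_ mini] /set0Pn [l0 hl0].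
set K := [set v | sdeg ends S v != 0%N].
set v0 := tail l0.
have hv0 : v0 \in K by rewrite inE (sdeg_ends hl0).1.
rewrite leqNgt; apply/negP => lt.
pose M (o : option V) (e : E) : R := if o is Some v then incidence v e else (e == l0)%:R.
pose Is := None |: (Some @: (K :\ v0)).
have cI : #|Is| = #|K|.
  rewrite cardsU1 card_imset; last exact: Some_inj.
  have -> : None \notin Some @: (K :\ v0) by apply/imsetP => [[v _]].
  by rewrite (cardsD1 v0 K) hv0.
have lt' : (#|Is| < #|S|)%N by rewrite cI.
have [y [sy [nzy cy]]] := underdetermined_system_nontrivial M lt'.
apply: (mini (S :\ l0)); first by rewrite properD1.
exists y; split.
  move=> f; rewrite in_setD1 negb_and negbK => /orP [/eqP ->|]; last exact: sy.
  by have := cy None; rewrite setU11 /M sum_delta_mul => /(_ isT).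
split => //; apply: (@circulation_from y v0) => v hv.
case: (boolP (v \in K)) => hK.
  apply: (cy (Some v)); rewrite in_setU1 /=; apply/imsetP; exists v => //.
  by rewrite in_setD1 hv hK.
by apply: (circulation_off sy); move: hK; rewrite inE negbK => /eqP.
Qed.

Lemma sdeg_0_or_2 S :
  (forall v, sdeg ends S v != 0%N -> 2 <= sdeg ends S v)%N ->
  (#|S| <= #|[set v | sdeg ends S v != 0%N]|)%N ->
  forall v, sdeg ends S v = 0%N \/ sdeg ends S v = 2%N.
Proof.
move=> deg2 leSK v.
set K := [set v | sdeg ends S v != 0%N] in leSK.
case: (boolP (v \in K)) => hK; last by left; move: hK; rewrite inE negbK => /eqP.
have hv : sdeg ends S v != 0%N by move: hK; rewrite inE.
right; apply/eqP; rewrite eqn_leq deg2 // andbT.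
have sumK : (\sum_(w in K) sdeg ends S w = 2 * #|S|)%N.
  rewrite -sum_sdeg [RHS](bigID (mem K)) /= [X in (_ + X)%N]big1 ?addn0 //.
  by move=> w; rewrite inE negbK => /eqP.
rewrite (bigD1 v hK) /= in sumK.
have hrest : (2 * #|K :\ v| <= \sum_(w in K | w != v) sdeg ends S w)%N.
  rewrite mulnC -sum_nat_const.
  apply: (@leq_trans (\sum_(w in K :\ v) sdeg ends S w)).
    by apply: leq_sum => w; rewrite in_setD1 inE => /andP [_ hw]; exact: deg2.
  by apply: eq_leq; apply: eq_bigl => w; rewrite in_setD1 andbC.
have cK := cardsD1 v K; rewrite hK /= in cK.
move: sumK hrest; set X := (\sum_(i | _) _)%N; lia.
Qed.

Lemma circulation_restrict (S : {set E}) (U : {set V}) x :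
  (forall e, e \notin S -> x e = 0) -> circulation x ->
  (forall e, e \in S -> (tail e \in U) = (head e \in U)) ->
  circulation (fun e => if tail e \in U then x e else 0).
Proof.
move=> supp cx clos v.
have off e : e \in S -> tail e \in U -> v \notin U -> ~~ incident v e.
  move=> he ht hv; apply/negP => /orP [] /eqP hvv.
    by move: ht; rewrite hvv (negbTE hv).
  by move: ht; rewrite clos // hvv (negbTE hv).
case: (boolP (v \in U)) => hv.
  rewrite -[RHS](cx v); apply: eq_bigr => e _; case: ifP => // ht.
  case: (boolP (e \in S)) => he; last by rewrite supp.
  rewrite incidence_notin ?mul0r ?mulr0 //; apply/negP => /orP [] /eqP hvv.
    by move: ht; rewrite hvv hv.
  by move: ht; rewrite clos // hvv hv.
apply: big1 => e _; case: ifP => ht; last by rewrite mulr0.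
case: (boolP (e \in S)) => he; last by rewrite supp ?mulr0.
by rewrite incidence_notin ?mul0r // off.
Qed.

Lemma loopless_incident_edge S u : loopless S -> sdeg ends S u != 0%N ->
  exists2 e, e \in S & incident u e.
Proof.
move=> lf; rewrite sdeg_loopless // -lt0n => /card_gt0P [e].
by rewrite inE => /andP [h1 h2]; exists e.
Qed.

(* Restricting a circulation to the component of u gives a dependent proper
   subset as soon as some edge of S lies outside that component. *)
Lemma circuit_connected S u w : col_circuit incidence S -> loopless S ->
  sdeg ends S u != 0%N -> sdeg ends S w != 0%N -> connect (subadj ends S) u w.
Proof.
move=> circS lf hu hw; apply/negPn/negP => nc.
have [[x [supp [nzx cx]]] mini] := circS.
have suppS := circuit_support circS supp nzx cx.
set Cu := [set z | connect (subadj ends S) u z].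
have clos e : e \in S -> (tail e \in Cu) = (head e \in Cu).
  move=> he; rewrite !inE; apply/idP/idP => h.
    exact: connect_trans h (connect1 (subadj_ends he)).
  by apply: connect_trans h (connect1 _); rewrite subadj_sym subadj_ends.
have [eu heu iu] := loopless_incident_edge lf hu.
have [ew hew iw] := loopless_incident_edge lf hw.
have tu : tail eu \in Cu.
  by move: iu => /orP [] /eqP h; [rewrite h|rewrite clos // h]; rewrite inE connect0.
have tw : tail ew \notin Cu.
  apply/negP => h; apply: (negP nc).
  by move: iw h => /orP [] /eqP hh; [rewrite hh|rewrite clos // hh]; rewrite inE.
apply: (mini (S :\ ew)); first by rewrite properD1.
exists (fun e => if tail e \in Cu then x e else 0); split.
  move=> f; rewrite in_setD1 negb_and negbK => /orP [/eqP ->|hf].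
    by rewrite (negbTE tw).
  by rewrite supp //; case: ifP.
split; first by exists eu; rewrite tu suppS.
exact: circulation_restrict supp cx clos.
Qed.

Lemma circuit_cycle S : col_circuit incidence S -> is_cycle ends S.
Proof.
move=> circS; have [[x [supp [[l0 hl0] cx]]] _] := circS.
have hl0S : l0 \in S by apply: contraR hl0 => h; rewrite supp.
case: (boolP [exists l in S, tail l == head l]).
  move=> /exists_inP [l hl /eqP hll].
  by rewrite (circuit_loop circS hl hll); exact: loop_cycle.
rewrite negb_exists => /forallP lf'.
have lf : loopless S by move=> f hf; have := lf' f; rewrite hf.
have suppS := circuit_support circS supp (ex_intro _ l0 hl0) cx.
split; first by apply/set0Pn; exists l0.
split; last by move=> u w; exact: circuit_connected.
apply: sdeg_0_or_2; last by apply: circuit_card_le => //; apply/set0Pn; exists l0.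
by move=> v; exact: circulation_sdeg_ge2 lf supp suppS cx.
Qed.

Lemma incidence_represents : represents_cycle_matroid ends incidence.
Proof. by move=> S; split; [exact: circuit_cycle|exact: cycle_circuit]. Qed.

(** * Bases of the incidence matroid *)

Definition indep (B : {set E}) := ~ col_dependent incidence B.
Definition is_basis (B : {set E}) :=
  indep B /\ forall c, c \notin B -> col_dependent incidence (c |: B).

Lemma exists_basis : exists B, is_basis B.
Proof.
have i0 : indep set0.
  by move=> [x [supp [[l hl] _]]]; move: hl; rewrite supp ?inE ?eqxx.
suff H k (B : {set E}) : (#|~: B| <= k)%N -> indep B -> exists B', is_basis B'.
  exact: (H _ set0 (leqnn _) i0).
elim: k B => [|k IH] B hk iB.
  exists B; split => // c hc; exfalso.
  move: hk; rewrite leqn0 cards_eq0 => /eqP h.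
  have : c \in ~: B by rewrite inE hc.
  by rewrite h inE.
case: (pselect (exists c, c \notin B /\ indep (c |: B))) => [[c [hc ic]]|hno].
  apply: (IH (c |: B)) => //.
  move: hk; rewrite setCU (cardsD1 c (~: B)) inE hc /=.
  by have -> : ~: [set c] :&: ~: B = ~: B :\ c by apply/setP => z; rewrite !inE andbC.
exists B; split => // c hc; apply: contrapT => hd; apply: hno; by exists c.
Qed.

Local Notation component_roots := [set v | roots (gadj ends) v].

Lemma gadj_connect_sym : connect_sym (gadj ends).
Proof. exact/sym_connect_sym/subadj_sym. Qed.

Lemma root_ends e : fingraph.root (gadj ends) (tail e) = fingraph.root (gadj ends) (head e).
Proof.
by apply/(fingraph.rootP gadj_connect_sym); apply: connect1; apply: subadj_ends; rewrite inE.
Qed.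

(* Each component contributes one redundant conservation law. *)
Lemma indep_card_le B : indep B -> (#|B| + #|component_roots| <= #|V|)%N.
Proof.
move=> iB; rewrite leqNgt; apply/negP => lt.
have lt' : (#|~: component_roots| < #|B|)%N by move: (cardsC component_roots); lia.
have [x [supp [nzx cx]]] := underdetermined_system_nontrivial incidence lt'.
apply: iB; exists x; split => //; split => //.
move=> r; case: (boolP (r \in component_roots)) => hr; last by apply: cx; rewrite inE.
set Cr := [set v | fingraph.root (gadj ends) v == r].
have hrC : r \in Cr by move: hr; rewrite !inE.
have : \sum_(v in Cr) \sum_e incidence v e * x e = 0.
  by rewrite sum_conservation_in big1 // => e _; rewrite !inE root_ends subrr mul0r.
rewrite (bigD1 r hrC) /= [X in _ + X]big1 ?addr0 //.
move=> v /andP [hv hvr]; have hv' : v \in Cr := hv.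
apply: cx; rewrite !inE; apply/negP => rv.
by move: hv' hvr; rewrite /Cr inE (eqP rv) => /eqP ->; rewrite eqxx.
Qed.

Lemma potential_root (y : V -> R) : (forall e, y (tail e) = y (head e)) ->
  forall v, y v = y (fingraph.root (gadj ends) v).
Proof.
move=> cst v; apply: (@connect_ind _ _ (fun w => y v = y w) v) => //; last first.
  exact: connect_root.
by move=> a b -> /subadjP [e _ [] h]; have := cst e; rewrite h.
Qed.

Lemma basis_orthogonal B (y : V -> R) : is_basis B ->
  (forall b, b \in B -> \sum_v y v * incidence v b = 0) ->
  forall e, \sum_v y v * incidence v e = 0.
Proof.
move=> [iB mB] yB c; case: (boolP (c \in B)) => hc; first exact: yB.
have [z [sz [[l hl] cz]]] := mB c hc.
have zc : z c != 0.
  apply/negP => /eqP zc0; apply: iB; exists z; split; last by split; [exists l|].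
  move=> f hf; case: (eqVneq f c) => [->//|ne]; apply: sz.
  by rewrite in_setU1 negb_or ne hf.
have : \sum_v y v * \sum_e incidence v e * z e = 0.
  by rewrite big1 // => v _; rewrite cz mulr0.
under eq_bigr => v _ do rewrite mulr_sumr.
under eq_bigr => v _ do under eq_bigr => e _ do rewrite mulrA.
rewrite exchange_big /= (bigD1 c) //= [X in _ + X]big1 ?addr0.
  by rewrite -mulr_suml => /eqP; rewrite mulf_eq0 (negbTE zc) orbF => /eqP.
move=> e he; case: (boolP (e \in B)) => heB; first by rewrite -mulr_suml yB // mul0r.
by rewrite sz ?in_setU1 ?negb_or ?he // big1 // => v _; rewrite mulr0.
Qed.

(* A potential orthogonal to the columns of B and vanishing at every root is
   constant on components, hence zero. *)
Lemma basis_card_ge B : is_basis B -> (#|V| <= #|B| + #|component_roots|)%N.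
Proof.
move=> basB; rewrite leqNgt; apply/negP => lt.
pose M (o : E + V) (v : V) : R :=
  if o is inl b then incidence v b else (v == (if o is inr r then r else v))%:R.
pose Is : {set E + V} := (inl @: B) :|: (inr @: component_roots).
have cI : (#|Is| < #|[set: V]|)%N.
  rewrite cardsT; apply: leq_ltn_trans lt; rewrite /Is cardsU !card_imset.
  - exact: leq_subr.
  - by move=> a b [].
  - by move=> a b [].
have [y [_ [[v0 hv0] cy]]] := underdetermined_system_nontrivial M cI.
have yB b : b \in B -> \sum_v y v * incidence v b = 0.
  move=> hb; have /cy h : inl b \in Is by rewrite in_setU imset_f.
  by rewrite -[RHS]h; apply: eq_bigr => v _; rewrite mulrC.
have yR r : r \in component_roots -> y r = 0.
  move=> hr; have /cy : inr r \in Is by rewrite in_setU imset_f ?orbT.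
  by rewrite /M sum_delta_mul.
have cst e : y (tail e) = y (head e).
  apply/eqP; rewrite eq_sym -subr_eq0 -potential_incidence.
  exact/eqP/(basis_orthogonal basB yB).
move: hv0; rewrite (potential_root cst) yR ?eqxx //.
by rewrite inE; exact: (fingraph.roots_root gadj_connect_sym v0).
Qed.

Lemma basis_card B : is_basis B -> #|B| = graph_rank ends.
Proof.
move=> basB; have := indep_card_le basB.1; have := basis_card_ge basB.
have ncomp : n_comp (gadj ends) predT = #|component_roots|.
  by apply: eq_card => v; rewrite !inE andbT.
rewrite /graph_rank ncomp; lia.
Qed.

(** * Fundamental circuits *)

Definition fundamental (B : {set E}) c (f : E -> R) :=
  [/\ circulation f, f c = 1 & forall e, e \notin c |: B -> f e = 0].

Lemma indep_circulation0 B h : indep B -> (forall e, e \notin B -> h e = 0) ->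
  circulation h -> h =1 (fun _ => 0).
Proof.
move=> iB sh ch e; apply/eqP; apply: contraT => ne; exfalso.
by apply: iB; exists h; split => //; split => //; exists e.
Qed.

Lemma circulation_chord_neq0 B c z : indep B ->
  (forall e, e \notin c |: B -> z e = 0) -> (exists l, z l != 0) -> circulation z ->
  z c != 0.
Proof.
move=> iB sz nz cz; apply/negP => /eqP zc0; apply: iB; exists z; split => //.
move=> f hf; case: (eqVneq f c) => [->//|ne]; apply: sz.
by rewrite in_setU1 negb_or ne hf.
Qed.

Lemma exists_fundamental B c : is_basis B -> c \notin B ->
  exists f, fundamental B c f.
Proof.
move=> [iB mB] hc; have [z [sz [nz cz]]] := mB c hc.
have zc := circulation_chord_neq0 iB sz nz cz.
exists (fun e => z e / z c); split.
- exact: circulationZ.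
- by rewrite divff.
- by move=> e he; rewrite sz ?mul0r.
Qed.

Lemma fundamental_circulations B : is_basis B ->
  exists phi : E -> E -> R, forall c, c \notin B -> fundamental B c (phi c).
Proof.
move=> basB.
have H c : exists f, c \notin B -> fundamental B c f.
  case: (boolP (c \in B)) => hc; first by exists (fun _ => 0).
  by have [f hf] := exists_fundamental basB hc; exists f.
by have [phi hphi] := choice H; exists phi.
Qed.

(* A circulation in c + B is determined by its value at c. *)
Lemma fundamental_support_circuit B c f : indep B -> fundamental B c f ->
  col_circuit incidence [set e | f e != 0].
Proof.
move=> iB [cf fc sf]; split.
  exists f; split; first by move=> e; rewrite inE negbK => /eqP.
  by split => //; exists c; rewrite fc oner_neq0.
move=> U /properP [sUT [e heT heU]] [g [sg [nzg cg]]].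
have sg' e' : e' \notin c |: B -> g e' = 0.
  move=> he'; apply: sg; apply: contra he' => hU.
  have : e' \in [set e | f e != 0] by apply: (subsetP sUT).
  by rewrite inE; apply: contraR => h; rewrite sf.
have gc := circulation_chord_neq0 iB sg' nzg cg.
have h0 : (fun e => f e - g e / g c) =1 (fun=> 0).
  apply: (indep_circulation0 iB _ (circulationB cf (circulationZ _ cg))) => e' he'.
  case: (eqVneq e' c) => [->|ne]; first by rewrite fc divff ?subrr.
  have hn : e' \notin c |: B by rewrite in_setU1 negb_or ne.
  by rewrite sf // sg' // mul0r subrr.
have := h0 e; rewrite /= sg // mul0r subr0 => /eqP.
by rewrite inE in heT; rewrite (negbTE heT).
Qed.

Lemma fundamental_sign B c f : indep B -> fundamental B c f -> forall e, is_sign (f e).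
Proof.
move=> iB ff; have [cf fc _] := ff.
have cyc := circuit_cycle (fundamental_support_circuit iB ff).
have hcT : c \in [set e | f e != 0] by rewrite inE fc oner_neq0.
move=> e; case: (boolP (e \in [set e | f e != 0])) => heT.
  right; have sT e' : e' \notin [set e | f e != 0] -> f e' = 0.
    by rewrite inE negbK => /eqP.
  have := cycle_circulation_norm cyc sT cf heT hcT; rewrite fc normr1 => /eqP.
  by rewrite eqr_norml ler01 andbT => /orP [] /eqP; auto.
by left; move: heT; rewrite inE negbK => /eqP.
Qed.

(** * The reduced matrix (I | C) *)

Section Reduced.
Variables (B : {set E}) (phi : E -> E -> R) (k : nat) (b : 'I_k -> E).
Hypothesis iB : indep B.
Hypothesis hphi : forall c, c \notin B -> fundamental B c (phi c).
Hypothesis hb : forall i, b i \in B.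
Hypothesis hbs : forall e, e \in B -> exists i, b i = e.

Definition reduced_mx i e : R := if e \in B then (e == b i)%:R else - phi e (b i).

Lemma reduced_mx_basis i j : injective b -> reduced_mx j (b i) = (i == j)%:R.
Proof. by move=> binj; rewrite /reduced_mx hb (inj_eq binj). Qed.

Lemma sum_chords_fundamental x c' : c' \notin B ->
  \sum_(c | c \notin B) x c * phi c c' = x c'.
Proof.
move=> hc'; have [_ phic' _] := hphi hc'.
rewrite (bigD1 c') //= phic' mulr1 big1 ?addr0 // => c /andP [hc ne].
have [_ _ ->] := hphi hc; first by rewrite mulr0.
by rewrite in_setU1 negb_or eq_sym ne hc'.
Qed.

Lemma reduced_mx_row i x :
  \sum_e reduced_mx i e * x e = x (b i) - \sum_(c | c \notin B) x c * phi c (b i).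
Proof.
rewrite (bigID (fun e => e \in B)) /=; congr (_ + _).
  rewrite (bigD1 (b i)) ?hb //= /reduced_mx hb eqxx mul1r big1 ?addr0 //.
  by move=> e /andP [he ne]; rewrite he (negbTE ne) mul0r.
by rewrite -sumrN; apply: eq_bigr => e he; rewrite /reduced_mx (negbTE he) mulNr mulrC.
Qed.

(* Both sides say that x agrees with the combination of fundamental
   circulations given by its values on the chords. *)
Lemma reduced_mx_kernel x : in_kernel reduced_mx x <-> circulation x.
Proof.
have cy : circulation (fun e => \sum_(c | c \notin B) x c * phi c e).
  by apply: circulation_lin => c hc; have [] := hphi hc.
split => [h|cx i].
  apply: eq_circulation cy => e.
  case: (boolP (e \in B)) => he; last by rewrite sum_chords_fundamental.
  have [i <-] := hbs he.
  by have /eqP := h i; rewrite reduced_mx_row subr_eq0 => /eqP ->.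
rewrite reduced_mx_row; apply: (indep_circulation0 iB _ (circulationB cx cy)).
by move=> e he; rewrite sum_chords_fundamental // subrr.
Qed.

Lemma reduced_mx_represents : represents_cycle_matroid ends reduced_mx.
Proof.
have dep S : col_dependent reduced_mx S <-> col_dependent incidence S.
  by split => -[x [s [n c]]]; exists x; do 2 split => //; apply/reduced_mx_kernel.
move=> S; rewrite -incidence_represents.
by split => -[d m]; split => [|T hT /dep]; [apply/dep|apply: m|apply/dep|apply: m].
Qed.

Lemma reduced_mx_sign i e : is_sign (reduced_mx i e).
Proof.
rewrite /reduced_mx; case: ifP => he; first by case: eqP; rewrite /is_sign; auto.
case: (fundamental_sign iB (hphi (negbT he)) (b i)) => [->|[->|->]].
- by left; rewrite oppr0.
- by right; right.
- by right; left; rewrite opprK.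
Qed.

End Reduced.

(** * Cuts separating the forest edges of a pair *)

Lemma connect_flow (X : {set E}) u w : connect (subadj ends X) u w ->
  exists z : E -> R, (forall e, e \notin X -> z e = 0) /\
    forall v, \sum_e incidence v e * z e = (v == w)%:R - (v == u)%:R.
Proof.
pose P w := exists z : E -> R, (forall e, e \notin X -> z e = 0) /\
  forall v, \sum_e incidence v e * z e = (v == w)%:R - (v == u)%:R.
apply: (@connect_ind _ _ P).
  exists (fun _ => 0); split => // v; rewrite subrr; apply: big1 => e _; by rewrite mulr0.
move=> a b' [z [sz hz]] /subadjP [e he hab].
have ext s : (forall v, (v == a)%:R - (v == u)%:R + s * incidence v e =
                        (v == b')%:R - (v == u)%:R) -> P b'.
  move=> hs; exists (fun f => z f + s * (f == e)%:R); split.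
    move=> f hf; rewrite sz //; case: eqP => [ef|]; last by rewrite mulr0 addr0.
    by move: hf; rewrite ef he.
  move=> v; under eq_bigr => f _ do rewrite mulrDr [incidence v f * (_ * _)]mulrCA.
  rewrite big_split /= -mulr_sumr hz -hs; congr (_ + s * _).
  by rewrite -(sum_delta_mul e (incidence v)); apply: eq_bigr => f _; rewrite mulrC.
by case: hab => h; [apply: (ext 1)|apply: (ext (-1))] => v; rewrite /incidence h /=; ring.
Qed.

Section PairCuts.
Variable (B : {set E}).
Hypothesis iB : indep B.

Definition fund_side e := [set v | connect (subadj ends (B :\ e)) (tail e) v].

(* A path from the tail to the head of e in B - e would close a cycle in B. *)
Lemma fund_side_head e : e \in B -> head e \notin fund_side e.
Proof.
move=> he; rewrite inE; apply/negP => /connect_flow [z [sz hz]].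
apply: iB; exists (fun f => (f == e)%:R - z f); split; last split.
- move=> f hf; have ne : f != e by apply: contra hf => /eqP ->.
  by rewrite (negbTE ne) sz ?subrr // in_setD1 (negbTE hf) andbF.
- by exists e; rewrite eqxx sz ?subr0 ?oner_neq0 // in_setD1 eqxx.
- move=> v; under eq_bigr => f _ do rewrite mulrBr.
  rewrite sumrB hz (eq_bigr (fun f => (f == e)%:R * incidence v f)).
    by rewrite sum_delta_mul /incidence subrr.
  by move=> f _; rewrite mulrC.
Qed.

Lemma fund_side_ends e b' : b' \in B -> b' != e ->
  (tail b' \in fund_side e) = (head b' \in fund_side e).
Proof.
move=> hb ne; rewrite !inE.
have adj : subadj ends (B :\ e) (tail b') (head b') by rewrite subadj_ends // in_setD1 ne.
apply/idP/idP => h; first exact: connect_trans h (connect1 adj).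
by apply: connect_trans h (connect1 _); rewrite subadj_sym.
Qed.

Definition pair_side (p : {set E}) := [set v | odd #|[set f in p :&: B | v \in fund_side f]|].
Definition cut_sign (p : {set E}) e : R :=
  (head e \in pair_side p)%:R - (tail e \in pair_side p)%:R.

Lemma cut_sign_off (p : {set E}) e : e \in B -> e \notin p -> cut_sign p e = 0.
Proof.
move=> he hp.
suff eq : [set f in p :&: B | head e \in fund_side f] =
          [set f in p :&: B | tail e \in fund_side f].
  by rewrite /cut_sign /pair_side !in_set eq subrr.
apply/setP => f; rewrite !inE.
case: (boolP (f \in p)) => //= fp; case: (boolP (f \in B)) => //= fB.
have ne : e != f by apply: contra hp => /eqP ->.
by have := fund_side_ends he ne; rewrite !inE => ->.
Qed.

Lemma cut_sign_on (p : {set E}) e : e \in B -> e \in p -> cut_sign p e != 0.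
Proof.
move=> he hp; rewrite /cut_sign /pair_side !in_set.
have eq1 : [set f in p :&: B | tail e \in fund_side f] =
           e |: [set f in p :&: B | head e \in fund_side f].
  apply/setP => f; rewrite !inE; case: (eqVneq f e) => [->|ne] /=.
    by rewrite hp he connect0.
  case: (boolP (f \in p)) => //= fp; case: (boolP (f \in B)) => //= fB.
  by rewrite eq_sym in ne; have := fund_side_ends he ne; rewrite !inE => ->.
have nin : e \notin [set f in p :&: B | head e \in fund_side f].
  by rewrite inE negb_and (fund_side_head he) orbT.
rewrite eq1 cardsU1 nin /= add0n.
by case: (odd _); rewrite /= ?subr0 ?sub0r ?oppr_eq0 oner_neq0.
Qed.

Lemma cut_sign_sign (p : {set E}) e : is_sign (cut_sign p e).
Proof.
by rewrite /cut_sign /is_sign; case: (_ \in _); case: (_ \in _);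
  rewrite ?subrr ?subr0 ?sub0r; auto.
Qed.

Definition pair_row (p : {set E}) e : R :=
  if e \in B then 0 else if e \in p then (cut_sign p e == 0)%:R else cut_sign p e.
Definition pair_coef (p : {set E}) e : R :=
  if e \in B then cut_sign p e else cut_sign p e - (cut_sign p e == 0)%:R.

Lemma pair_row_sign (p : {set E}) e : is_sign (pair_row p e).
Proof.
rewrite /pair_row /is_sign; case: ifP => _; first by left.
case: ifP => _; last exact: cut_sign_sign.
by case: eqP; auto.
Qed.

Lemma pair_coef_neq0 (p : {set E}) e : e \in p -> pair_coef p e != 0.
Proof.
move=> hp; rewrite /pair_coef; case: ifP => he; first exact: cut_sign_on.
case: (cut_sign_sign p e) => [->|[->|->]].
- by rewrite eqxx sub0r oppr_eq0 oner_neq0.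
- by rewrite oner_eq0 subr0 oner_neq0.
- by rewrite oppr_eq0 oner_eq0 subr0 oppr_eq0 oner_neq0.
Qed.

Lemma pair_row_relation (p : {set E}) x : circulation x ->
  \sum_e pair_row p e * x e + \sum_(e in p) pair_coef p e * x e = 0.
Proof.
move=> cx; rewrite -[RHS](circulation_cut (pair_side p) cx).
rewrite [X in _ + X]big_mkcond /= -big_split /=.
apply: eq_bigr => e _; rewrite -/(cut_sign p e).
case: (boolP (e \in p)) => hp; last first.
  rewrite addr0 /pair_row; case: ifP => he; last by rewrite (negbTE hp).
  by rewrite cut_sign_off ?mul0r.
rewrite -mulrDl /pair_row /pair_coef; case: ifP => he; first by rewrite add0r.
by rewrite hp addrC subrK.
Qed.

End PairCuts.

(** * The coextension *)

Section Coextension.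
Variables (B : {set E}) (phi : E -> E -> R) (k : nat) (b : 'I_k -> E).
Variable P : {set {set E}}.
Hypothesis iB : indep B.
Hypothesis hphi : forall c, c \notin B -> fundamental B c (phi c).
Hypothesis hb : forall i, b i \in B.
Hypothesis hbs : forall e, e \in B -> exists i, b i = e.

Definition coext_mx (rw : 'I_k + 'I_#|P|) (cl : E + 'I_#|P|) : R :=
  match rw, cl with
  | inl i, inl e => reduced_mx B phi b i e
  | inl _, inr _ => 0
  | inr j, inl e => pair_row B (enum_val j) e
  | inr j, inr l => (j == l)%:R
  end.

Lemma coext_mx_sign rw cl : is_sign (coext_mx rw cl).
Proof.
case: rw cl => [i|j] [e|l] /=.
- exact: reduced_mx_sign.
- by left.
- exact: pair_row_sign.
- by case: eqP; rewrite /is_sign; auto.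
Qed.

Lemma coext_mx_kernel x : in_kernel coext_mx x -> circulation (fun e => x (inl e)).
Proof.
move=> kx; apply/(reduced_mx_kernel iB hphi hb hbs) => i; have := kx (inl i).
by rewrite big_sumType /= [X in _ + X]big1 ?addr0 // => l _; rewrite mul0r.
Qed.

Lemma coext_mx_pair e1 e2 : e1 != e2 -> [set e1; e2] \in P ->
  exists (g : E + 'I_#|P|) (alpha beta : R), alpha != 0 /\ beta != 0 /\
    forall x, in_kernel coext_mx x -> x g = alpha * x (inl e1) + beta * x (inl e2).
Proof.
move=> ne hp; set p := [set e1; e2] in hp *.
set j := enum_rank_in hp p.
have ej : enum_val j = p by rewrite /j enum_rankK_in.
have h1 : e1 \in p by rewrite !inE eqxx.
have h2 : e2 \in p by rewrite !inE eqxx orbT.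
exists (inr j), (pair_coef B p e1), (pair_coef B p e2).
split; first exact: pair_coef_neq0.
split; first exact: pair_coef_neq0.
move=> x kx; have := pair_row_relation B p (coext_mx_kernel kx).
have := kx (inr j); rewrite big_sumType /=.
under [X in _ + X]eq_bigr => l _ do rewrite eq_sym.
rewrite sum_delta_mul ej => rj.
rewrite /p big_setU1 ?big_set1 ?inE //= => h.
by apply: (addrI (\sum_e pair_row B p e * x (inl e))); rewrite rj h.
Qed.

End Coextension.

End CycleMatroid.

Theorem theorem3p1 (R : realType) (V E : finType) (ends : E -> V * V)
  (P : {set {set E}}) (HP : forall p, p \in P -> #|p| = 2%N) :
  exists r : nat, (r <= #|P|)%N /\
  exists (A : 'I_(graph_rank ends) + 'I_r -> E + 'I_r -> R)
         (b : 'I_(graph_rank ends) -> E),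
    (* (i) block form: rows (I_rk-part, I_r-part); columns inl (b i) form
       the identity block, the columns inr k (labels in F) the middle block,
       the remaining E-columns form (C over D) *)
    injective b /\
        (forall i j, A (inl j) (inl (b i)) = (i == j)%:R) /\
        (forall j i, A (inr j) (inl (b i)) = 0) /\
        (forall i k, A (inl i) (inr k) = 0) /\
        (forall j k, A (inr j) (inr k) = (j == k)%:R) /\
        (forall rw cl, A rw cl = 0 \/ A rw cl = 1 \/ A rw cl = -1) /\
        represents_cycle_matroid ends (fun i e => A (inl i) (inl e)) /\
        forall e1 e2, e1 != e2 -> [set e1; e2] \in P ->
          exists (g : E + 'I_r) (alpha beta : R),
            alpha != 0 /\ beta != 0 /\
            forall x : E + 'I_r -> R, in_kernel A x ->
              x g = alpha * x (inl e1) + beta * x (inl e2).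
Proof.
have [B basB] := exists_basis R ends.
have [phi hphi] := fundamental_circulations basB.
have [b [binj hb hbs]] := enum_set_ord (basis_card basB).
exists #|P|; split => //; exists (coext_mx ends B phi b (P:=P)), b.
split => //; split; first by move=> i j; exact: reduced_mx_basis.
split; first by move=> j i; rewrite /= /pair_row hb.
do 3 (split => //); first exact: coext_mx_sign basB.1 hphi.
split; first exact: reduced_mx_represents basB.1 hphi hb hbs.
exact: coext_mx_pair basB.1 hphi hb hbs.
Qed.
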